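(* Consider Algorithm ProxSVRG (described in the context) with $b=1$, $\eta=1/(3Ln)$, $m=n$, and $T$ a multiple of $m$. Then the output $x_a$ satisfies $$\mathbb E\big[\|\mathcal G_\eta(x_a)\|^2\big]\le \frac{18Ln^2}{3n-2}\cdot\frac{F(x^0)-F(x^* )}{T},$$ where $x^*$ is an optimal solution of $\min_x F(x)$.
   Context: Setting: Let $n,d\ge 1$ be integers and $[n]=\{1,\dots,n\}$. Let $f_1,\dots,f_n:\mathbb R^d\to\mathbb R$ be differentiable (possibly nonconvex) functions, each $L$-smooth for some $L>0$, i.e. $\|\nabla f_i(x)-\nabla f_i(y)\|\le L\|x-y\|$ for all $x,y\in\mathbb R^d$ and $i\in[n]$. Let $f=\frac1n\sum_{i=1}^n f_i$. Let $h:\mathbb R^d\to\mathbb R\cup\{+\infty\}$ be proper, lower semicontinuous and convex, with closed domain. Let $F=f+h$, and let $x^*$ be a global minimizer of $F$ on $\mathbb R^d$ (assumed to exist). For $\eta>0$, $\mathrm{prox}_{\eta h}(x):=\arg\min_{y\in\mathbb R^d}\big(h(y)+\frac1{2\eta}\|y-x\|^2\big)$, and the gradient mapping is $\mathcal G_\eta(x):=\frac1\eta\big[x-\mathrm{prox}_{\eta h}(x-\eta\nabla f(x))\big]$. Algorithm ProxSVRG$(x^0,T,m,b,\eta)$: Given $x^0\in\mathbb R^d$, positive integers $T,m,b$ and $\eta>0$, let $S=\lceil T/m\rceil$ and set $\tilde x^0=x^0_m=x^0$. For $s=0,\dots,S-1$: set $x^{s+1}_0=x^s_m$ and $g^{s+1}=\frac1n\sum_{i=1}^n\nabla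 f_i(\tilde x^s)$; for $t=0,\dots,m-1$: draw a multiset $I_t$ of $b$ indices, each drawn independently and uniformly at random from $[n]$ (with replacement, independently of all previous draws), set $v^{s+1}_t=\frac1b\sum_{i\in I_t}\big(\nabla f_i(x^{s+1}_t)-\nabla f_i(\tilde x^s)\big)+g^{s+1}$ and $x^{s+1}_{t+1}=\mathrm{prox}_{\eta h}(x^{s+1}_t-\eta v^{s+1}_t)$; after the inner loop set $\tilde x^{s+1}=x^{s+1}_m$. The output $x_a$ is chosen uniformly at random from $\{x^{s+1}_t: 0\le t\le m-1,\ 0\le s\le S-1\}$. Expectations are over all randomness of the algorithm. *)

From mathcomp Require Import ssreflect ssrfun ssrbool eqtype ssrnat seq fintype bigop.
From Stdlib Require Import Reals.
Open Scope R_scope.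

Definition vec (d : nat) := 'I_d -> R.

Definition vadd {d} (u v : vec d) : vec d := fun j => u j + v j.
Definition vsub {d} (u v : vec d) : vec d := fun j => u j - v j.
Definition vscale {d} (a : R) (u : vec d) : vec d := fun j => a * u j.
Definition dot {d} (u v : vec d) : R := \big[Rplus/R0]_(j < d) (u j * v j).
Definition norm2 {d} (u : vec d) : R := dot u u.
Definition norm {d} (u : vec d) : R := sqrt (norm2 u).

Fixpoint rsum (k : nat) (g : nat -> R) : R :=
  match k with O => 0 | S k' => rsum k' g + g k' end.

Definition has_gradient {d} (phi : vec d -> R) (g : vec d) (x : vec d) : Prop :=
  forall eps, 0 < eps -> exists delta, 0 < delta /\
    forall y, norm (vsub y x) < delta ->
      Rabs (phi y - phi x - dot g (vsub y x)) <= eps * norm (vsub y x).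

(* An extended-real-valued h : R^d -> R ∪ {+oo} is encoded by its effective
   domain [dom] and its (real) values on [dom]; h = +oo outside [dom]. *)
Definition proper_dom {d} (dom : vec d -> Prop) : Prop := exists x, dom x.

Definition closed_dom {d} (dom : vec d -> Prop) : Prop :=
  forall x, ~ dom x -> exists delta, 0 < delta /\
    forall y, norm (vsub y x) < delta -> ~ dom y.

Definition convex_ext {d} (dom : vec d -> Prop) (h : vec d -> R) : Prop :=
  forall x y lam, dom x -> dom y -> 0 <= lam <= 1 ->
    dom (vadd (vscale lam x) (vscale (1 - lam) y)) /\
    h (vadd (vscale lam x) (vscale (1 - lam) y)) <= lam * h x + (1 - lam) * h y.

(* lower semicontinuity of the extended function; at points outside a closed
   domain it holds automatically, so only points of the domain matter. *)
Definition lsc_ext {d} (dom : vec d -> Prop) (h : vec d -> R) : Prop :=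
  forall x, dom x -> forall eps, 0 < eps -> exists delta, 0 < delta /\
    forall y, dom y -> norm (vsub y x) < delta -> h x - eps < h y.

Definition is_prox {d} (dom : vec d -> Prop) (h : vec d -> R) (eta : R)
  (x p : vec d) : Prop :=
  dom p /\ forall y, dom y ->
    h p + norm2 (vsub p x) / (2 * eta) <= h y + norm2 (vsub y x) / (2 * eta).

Definition full_grad {d} (n : nat) (grad : nat -> vec d -> vec d) (x : vec d)
  : vec d := fun j => / INR n * rsum n (fun i => grad i x j).

Definition grad_map {d} (n : nat) (grad : nat -> vec d -> vec d)
  (prox : vec d -> vec d) (eta : R) (x : vec d) : vec d :=
  vscale (/ eta) (vsub x (prox (vsub x (vscale eta (full_grad n grad x))))).

(* ProxSVRG with b = 1.  w k is the index drawn at global inner step k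
   (k = s*m + t).  inner xt s t = x^{s+1}_t given snapshot xt = x~^s. *)
Fixpoint inner {d} (n m : nat) (grad : nat -> vec d -> vec d)
  (prox : vec d -> vec d) (eta : R) (w : nat -> nat) (xt : vec d) (s t : nat)
  : vec d :=
  match t with
  | O => xt
  | S t' =>
      let x := inner n m grad prox eta w xt s t' in
      let i := w (s * m + t')%nat in
      let v := vadd (vsub (grad i x) (grad i xt)) (full_grad n grad xt) in
      prox (vsub x (vscale eta v))
  end.

Fixpoint snapshot {d} (n m : nat) (grad : nat -> vec d -> vec d)
  (prox : vec d -> vec d) (eta : R) (w : nat -> nat) (x0 : vec d) (s : nat)
  : vec d :=
  match s with
  | O => x0
  | S s' => inner n m grad prox eta w (snapshot n m grad prox eta w x0 s') s' m
  end.

Definition iterate {d} (n m : nat) (grad : nat -> vec d -> vec d)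
  (prox : vec d -> vec d) (eta : R) (w : nat -> nat) (x0 : vec d) (s t : nat)
  : vec d :=
  inner n m grad prox eta w (snapshot n m grad prox eta w x0 s) s t.

Definition cons_idx (i : nat) (w : nat -> nat) : nat -> nat :=
  fun k => match k with O => i | S k' => w k' end.

(* Expectation over K i.i.d. indices w 0, ..., w (K-1), each uniform on
   {0,...,n-1} (0-based encoding of [n]). *)
Fixpoint expect (n K : nat) (g : (nat -> nat) -> R) : R :=
  match K with
  | O => g (fun _ => O)
  | S K' => / INR n * rsum n (fun i => expect n K' (fun w => g (cons_idx i w)))
  end.

From mathcomp Require Import ssreflect ssrfun ssrbool eqtype ssrnat seq fintype bigop.
From Stdlib Require Import Reals Lra Psatz FunctionalExtensionality.
From HB Require Import structures.
Open Scope R_scope.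

(* With b = 1 the SVRG direction v is controlled along every sample path:
   ||v - grad f(x)||^2 <= 4 L^2 ||x - snapshot||^2 whatever index is drawn.
   Comparing the proximal step with the exact proximal gradient step (the
   variational inequality of the prox together with the descent lemma) gives
     F(x_{t+1}) <= F(x_t) - eta/2 ||G(x_t)||^2 - (1/eta - L)/2 ||x_{t+1} - x_t||^2
                   + 2 eta L^2 ||x_t - snapshot||^2,
   and since ||x_t - snapshot||^2 <= t * sum_{k<t} ||x_{k+1} - x_k||^2, the
   last term is absorbed by the third one when 2 (eta L)^2 m (m - 1) + eta L <= 1.
   Telescoping over all epochs bounds the sum of ||G||^2 by
   2 (F(x^0) - min F) / eta = 6 L n (F(x^0) - min F) on every path, hence in
   expectation; 6 L n is below the stated constant. *)

Lemma Rplus_associative : associative Rplus.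
Proof. by move=> x y z; rewrite Rplus_assoc. Qed.

HB.instance Definition _ :=
  Monoid.isComLaw.Build R R0 Rplus Rplus_associative Rplus_comm Rplus_0_l.

Lemma big_Rmult_distrl d c (F : 'I_d -> R) :
  \big[Rplus/R0]_(j < d) (c * F j) = c * \big[Rplus/R0]_(j < d) F j.
Proof.
elim: d F => [|d IH] F; first by rewrite !big_ord0 Rmult_0_r.
by rewrite !big_ord_recr IH /= Rmult_plus_distr_l.
Qed.

Lemma big_Rminus d (F G : 'I_d -> R) :
  \big[Rplus/R0]_(j < d) (F j - G j) =
  \big[Rplus/R0]_(j < d) F j - \big[Rplus/R0]_(j < d) G j.
Proof.
rewrite (eq_bigr (fun j => F j + (-1) * G j)) => [|j _]; last ring.
by rewrite big_split big_Rmult_distrl /=; ring.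
Qed.

Lemma big_Rle d (F G : 'I_d -> R) : (forall j, F j <= G j) ->
  \big[Rplus/R0]_(j < d) F j <= \big[Rplus/R0]_(j < d) G j.
Proof.
elim: d F G => [|d IH] F G H; first by rewrite !big_ord0; lra.
by rewrite !big_ord_recr; apply: Rplus_le_compat; auto.
Qed.

Lemma rsum_ext k g1 g2 :
  (forall i, (i < k)%nat -> g1 i = g2 i) -> rsum k g1 = rsum k g2.
Proof.
elim: k => [|k IH] H //=; rewrite IH ?H // => i Hi; apply: H; exact: ltnW.
Qed.

Lemma rsum_le k g1 g2 :
  (forall i, (i < k)%nat -> g1 i <= g2 i) -> rsum k g1 <= rsum k g2.
Proof.
elim: k => [|k IH] H /=; first lra.
apply: Rplus_le_compat; last exact: H.
apply: IH => i Hi; apply: H; exact: ltnW.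
Qed.

Lemma rsum_add k g1 g2 : rsum k (fun i => g1 i + g2 i) = rsum k g1 + rsum k g2.
Proof. by elim: k => [|k IH] /=; [ring | rewrite IH; ring]. Qed.

Lemma rsum_sub k g1 g2 : rsum k (fun i => g1 i - g2 i) = rsum k g1 - rsum k g2.
Proof. by elim: k => [|k IH] /=; [ring | rewrite IH; ring]. Qed.

Lemma rsum_scale k c g : rsum k (fun i => c * g i) = c * rsum k g.
Proof. by elim: k => [|k IH] /=; [ring | rewrite IH; ring]. Qed.

Lemma rsum_const k c : rsum k (fun _ => c) = INR k * c.
Proof. by elim: k => [|k IH]; [rewrite /=; ring | rewrite S_INR [rsum _ _]/= IH; ring]. Qed.

Lemma rsum_INR_scale k c : rsum k (fun i => INR i * c) = INR k * (INR k - 1) / 2 * c.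
Proof. by elim: k => [|k IH]; [rewrite /=; field | rewrite S_INR [rsum _ _]/= IH; field]. Qed.

Lemma rsum_ge0 k g : (forall i, (i < k)%nat -> 0 <= g i) -> 0 <= rsum k g.
Proof. by move=> H; have := rsum_le k (fun _ => 0) g H; rewrite rsum_const; lra. Qed.

Lemma rsum_le_mono k1 k2 g :
  (k1 <= k2)%nat -> (forall i, 0 <= g i) -> rsum k1 g <= rsum k2 g.
Proof.
move=> Hk Hg; rewrite -(subnK Hk); elim: (k2 - k1)%nat => [|k IH].
- by rewrite add0n; lra.
- by rewrite addSn /=; have := Hg (k + k1)%nat; lra.
Qed.

Lemma rsum_big k d (F : nat -> 'I_d -> R) :
  rsum k (fun i => \big[Rplus/R0]_(j < d) F i j) =
  \big[Rplus/R0]_(j < d) rsum k (fun i => F i j).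
Proof. by elim: k => [|k IH] /=; [rewrite big1 | rewrite IH -big_split]. Qed.

Lemma rsum_telescope_le k (u v : nat -> R) :
  (forall t, (t < k)%nat -> u t.+1 <= u t - v t) -> u k + rsum k v <= u O.
Proof.
elim: k => [|k IH] H /=; first lra.
have := H k (ltnSn k); have := IH (fun t Ht => H t (ltnW Ht)); lra.
Qed.

Lemma rsum_sq_le k (a : nat -> R) : rsum k a ^ 2 <= INR k * rsum k (fun i => a i ^ 2).
Proof.
elim: k => [|k IH]; first by rewrite /=; lra.
case: k IH => [|k] IH; first by rewrite /=; lra.
change ((rsum k.+1 a + a k.+1) ^ 2 <=
        INR k.+2 * (rsum k.+1 (fun i => a i ^ 2) + a k.+1 ^ 2)); rewrite S_INR.
set s := rsum k.+1 a in IH *; set q := rsum k.+1 (fun i => a i ^ 2) in IH *.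
have Hk : 0 < INR k.+1 by apply/lt_0_INR/ltP.
(* Cauchy--Schwarz with weights k and 1: 2 s a <= s^2 / k + k a^2 *)
have : 0 <= (s - INR k.+1 * a k.+1) ^ 2 / INR k.+1.
{ by apply: Rmult_le_pos; [apply: pow2_ge_0 | apply/Rlt_le/Rinv_0_lt_compat]. }
have -> : (s - INR k.+1 * a k.+1) ^ 2 / INR k.+1 =
          s ^ 2 / INR k.+1 - 2 * s * a k.+1 + INR k.+1 * a k.+1 ^ 2 by field; lra.
have : s ^ 2 / INR k.+1 <= q.
{ apply: (Rmult_le_reg_l (INR k.+1)) => //.
  by rewrite (_ : INR k.+1 * (s ^ 2 / INR k.+1) = s ^ 2); [lra | field; lra]. }
nra.
Qed.

Lemma mean_le_const n (g : nat -> R) c : (1 <= n)%nat ->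
  (forall i, (i < n)%nat -> g i <= c) -> / INR n * rsum n g <= c.
Proof.
move=> Hn Hg; have Hn' : 0 < INR n by apply/lt_0_INR/ltP.
have := rsum_le n g _ Hg; rewrite rsum_const => H.
apply: (Rmult_le_reg_l (INR n)) => //.
by rewrite -Rmult_assoc Rinv_r; lra.
Qed.

Ltac vec_ring :=
  rewrite /norm2 /dot;
  repeat (rewrite -big_Rminus || rewrite -big_split || rewrite -big_Rmult_distrl);
  apply: eq_bigr => j _; rewrite /vsub /vadd /vscale /=; ring.

Section Vectors.
Variable d : nat.
Implicit Types (u v x y z p q : vec d).

Lemma norm2_ge0 u : 0 <= norm2 u.
Proof.
have := big_Rle _ (fun _ => 0) (fun j => u j * u j) (fun j => Rle_0_sqr (u j)).
by rewrite big1.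
Qed.

Lemma norm2_scale c u : norm2 (vscale c u) = c ^ 2 * norm2 u.
Proof. vec_ring. Qed.

Lemma norm2_subC x y : norm2 (vsub x y) = norm2 (vsub y x).
Proof. vec_ring. Qed.

Lemma dot_scale_r c u v : dot u (vscale c v) = c * dot u v.
Proof. vec_ring. Qed.

Lemma norm_scale c u : norm (vscale c u) = Rabs c * norm u.
Proof.
rewrite /norm norm2_scale sqrt_mult_alt; last exact: pow2_ge_0.
by rewrite -Rsqr_pow2 sqrt_Rsqr_abs.
Qed.

Lemma norm2_le_of_norm_le u v c : 0 <= c -> norm u <= c * norm v ->
  norm2 u <= c ^ 2 * norm2 v.
Proof.
rewrite /norm => Hc Huv.
rewrite -(sqrt_sqrt _ (norm2_ge0 u)) -(sqrt_sqrt _ (norm2_ge0 v)).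
have := sqrt_pos (norm2 u); nra.
Qed.

Lemma dot_polar x y z :
  2 * dot (vsub y x) (vsub z y) = norm2 (vsub z x) - norm2 (vsub y x) - norm2 (vsub z y).
Proof. vec_ring. Qed.

Lemma norm2_convex_comb l z p q :
  norm2 (vsub (vadd (vscale l z) (vscale (1 - l) p)) q) =
  norm2 (vsub p q) + 2 * l * dot (vsub p q) (vsub z p) + l ^ 2 * norm2 (vsub z p).
Proof. vec_ring. Qed.

Lemma dot_young c u v : 0 < c -> 2 * dot u v <= c * norm2 u + / c * norm2 v.
Proof.
move=> Hc; rewrite /norm2 /dot -!big_Rmult_distrl -big_split.
apply: big_Rle => j /=.
have : 0 <= / c * (c * u j - v j) ^ 2.
{ by apply: Rmult_le_pos; [apply/Rlt_le/Rinv_0_lt_compat | apply: pow2_ge_0]. }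
have -> : / c * (c * u j - v j) ^ 2 = c * (u j * u j) + / c * (v j * v j) - 2 * (u j * v j)
  by field; lra.
lra.
Qed.

Lemma norm2_sub_le u v : norm2 (vsub u v) <= 2 * norm2 u + 2 * norm2 v.
Proof.
rewrite /norm2 /dot -!big_Rmult_distrl -big_split.
by apply: big_Rle => j /=; rewrite /vsub; have := pow2_ge_0 (u j + v j); lra.
Qed.

Lemma norm2_rsum_le k (u : nat -> vec d) :
  norm2 (fun j => rsum k (fun i => u i j)) <= INR k * rsum k (fun i => norm2 (u i)).
Proof.
rewrite /norm2 /dot rsum_big -big_Rmult_distrl; apply: big_Rle => j.
rewrite (rsum_ext _ (fun i => u i j * u i j) (fun i => u i j ^ 2)) => [|i _]; last ring.
by have := rsum_sq_le k (fun i => u i j); rewrite /= Rmult_1_r.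
Qed.

Lemma norm2_mean_le n (u : nat -> vec d) : (1 <= n)%nat ->
  norm2 (fun j => / INR n * rsum n (fun i => u i j)) <= / INR n * rsum n (fun i => norm2 (u i)).
Proof.
move=> Hn; have Hn' : 0 < INR n by apply/lt_0_INR/ltP.
rewrite (_ : (fun j => _) = vscale (/ INR n) (fun j => rsum n (fun i => u i j))) //.
rewrite norm2_scale.
have -> : / INR n * rsum n (fun i => norm2 (u i)) =
          (/ INR n) ^ 2 * (INR n * rsum n (fun i => norm2 (u i))) by field; lra.
by apply: Rmult_le_compat_l; [apply: pow2_ge_0 | apply: norm2_rsum_le].
Qed.

Lemma norm2_telescope_le (x : nat -> vec d) t :
  norm2 (vsub (x t) (x O)) <= INR t * rsum t (fun k => norm2 (vsub (x k.+1) (x k))).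
Proof.
have -> : vsub (x t) (x O) = fun j => rsum t (fun k => vsub (x k.+1) (x k) j).
{ apply: functional_extensionality => j; rewrite /vsub.
  by elim: t => [|t IH] /=; [ring | rewrite -IH; ring]. }
exact: norm2_rsum_le.
Qed.

Lemma rsum_norm2_drift_le (x : nat -> vec d) m :
  rsum m (fun t => norm2 (vsub (x t) (x O))) <=
  INR m * (INR m - 1) / 2 * rsum m (fun k => norm2 (vsub (x k.+1) (x k))).
Proof.
set dd := fun k => norm2 (vsub (x k.+1) (x k)).
have Hdd k : 0 <= dd k by apply: norm2_ge0.
rewrite -rsum_INR_scale; apply: rsum_le => t Ht.
apply: Rle_trans (norm2_telescope_le x t) _.
apply: Rmult_le_compat_l; first exact: pos_INR.
by apply: rsum_le_mono => //; apply: ltnW.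
Qed.

End Vectors.

Section Descent.
Variables (d : nat) (phi : vec d -> R) (g : vec d -> vec d) (L : R).
Hypothesis HL : 0 < L.
Hypothesis Hgrad : forall x, has_gradient phi (g x) x.
Hypothesis Hlip : forall x y, norm2 (vsub (g x) (g y)) <= L ^ 2 * norm2 (vsub x y).

Lemma has_gradient_line_derivative x u t :
  derivable_pt_lim (fun t => phi (vadd x (vscale t u))) t
    (dot (g (vadd x (vscale t u))) u).
Proof.
move=> eps Heps; set z := vadd x (vscale t u); set K := norm u + 1.
have Hu : 0 <= norm u := sqrt_pos _.
have HK : 0 < K by rewrite /K; lra.
have [del [Hdel Hd]] := Hgrad z (eps / (2 * K)) ltac:(apply: Rdiv_lt_0_compat; lra).
have HdelK : 0 < del / K by apply: Rdiv_lt_0_compat; lra.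
exists (mkposreal _ HdelK) => s Hs0 /= Hs.
have Hs' : 0 < Rabs s := Rabs_pos_lt _ Hs0.
have Ez : vsub (vadd x (vscale (t + s) u)) z = vscale s u.
{ apply: functional_extensionality => j; rewrite /z /vsub /vadd /vscale; ring. }
have Hsmall : norm (vsub (vadd x (vscale (t + s) u)) z) < del.
{ rewrite Ez norm_scale; apply: (Rle_lt_trans _ (Rabs s * K)).
  - by apply: Rmult_le_compat_l; [apply: Rabs_pos | rewrite /K; lra].
  - by rewrite (_ : del = del / K * K); [apply: Rmult_lt_compat_r | field; lra]. }
have := Hd _ Hsmall; rewrite Ez dot_scale_r norm_scale.
set A := phi _ - phi z - _ => HA.
rewrite (_ : _ - _ = A / s); last by rewrite /A; field.
rewrite /Rdiv Rabs_mult Rabs_inv.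
apply: (Rmult_lt_reg_r (Rabs s)) => //; rewrite Rmult_assoc Rinv_l ?Rmult_1_r; last lra.
apply: (Rle_lt_trans _ _ _ HA).
have : eps / (2 * K) * (Rabs s * norm u) <= eps / 2 * Rabs s.
{ have -> : eps / (2 * K) * (Rabs s * norm u) = eps / 2 * Rabs s * (norm u / K)
    by field; lra.
  have : norm u / K <= 1.
  { apply: (Rmult_le_reg_r K); first lra.
    by rewrite /Rdiv Rmult_assoc Rinv_l; rewrite /K; lra. }
  have : 0 <= eps / 2 * Rabs s by apply: Rmult_le_pos; lra.
  nra. }
have : 0 < eps * Rabs s by apply: Rmult_lt_0_compat.
lra.
Qed.

Lemma dot_gradient_increment_le x u c : 0 < c ->
  dot (vsub (g (vadd x (vscale c u))) (g x)) u <= L * c * norm2 u.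
Proof.
move=> Hc; have HLc : 0 < L * c by apply: Rmult_lt_0_compat.
have Hinc : norm2 (vsub (g (vadd x (vscale c u))) (g x)) <= L ^ 2 * (c ^ 2 * norm2 u).
{ rewrite -norm2_scale; apply: Rle_trans (Hlip _ _) _; apply: Req_le.
  congr (_ * norm2 _); apply: functional_extensionality => j.
  rewrite /vsub /vadd /vscale; ring. }
have := dot_young _ _ (vsub (g (vadd x (vscale c u))) (g x)) u (Rinv_0_lt_compat _ HLc).
rewrite Rinv_inv.
have : / (L * c) * norm2 (vsub (g (vadd x (vscale c u))) (g x)) <= L * c * norm2 u.
{ apply: Rle_trans (Rmult_le_compat_l _ _ _ _ Hinc) _.
  - exact/Rlt_le/Rinv_0_lt_compat.
  - by apply: Req_le; field; lra. }
lra.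
Qed.

Lemma descent_le x y :
  phi y <= phi x + dot (g x) (vsub y x) + L / 2 * norm2 (vsub y x).
Proof.
set u := vsub y x; set N := norm2 u; set D := dot (g x) u.
pose psi t := phi (vadd x (vscale t u)) - D * t - L / 2 * N * t ^ 2.
have Hpsi c : 0 <= c <= 1 -> derivable_pt_lim psi c
    (dot (g (vadd x (vscale c u))) u - D - L / 2 * N * (INR 2 * c ^ 1)).
{ move=> _; apply: derivable_pt_lim_minus; last first.
  - exact/derivable_pt_lim_scal/derivable_pt_lim_pow.
  - rewrite -[X in _ - X]Rmult_1_r; apply: derivable_pt_lim_minus.
    + exact: has_gradient_line_derivative.
    + exact/derivable_pt_lim_scal/derivable_pt_lim_id. }
have [c [Ec [Hc0 _]]] := MVT_cor2 psi _ 0 1 Rlt_0_1 Hpsi.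
have E0 : vadd x (vscale 0 u) = x.
{ apply: functional_extensionality => j; rewrite /vadd /vscale; ring. }
have E1 : vadd x (vscale 1 u) = y.
{ apply: functional_extensionality => j; rewrite /u /vadd /vscale /vsub; ring. }
move: Ec; rewrite /psi E0 E1.
have := dot_gradient_increment_le x u c Hc0.
rewrite (_ : dot (vsub _ _) u = dot (g (vadd x (vscale c u))) u - D); last by rewrite /D; vec_ring.
rewrite /= -/N; lra.
Qed.

End Descent.

Lemma le_of_le_add_scaled a b c : 0 <= c ->
  (forall l, 0 < l <= 1 -> a <= b + l * c) -> a <= b.
Proof.
move=> Hc H; apply: Rnot_lt_le => Hba.
have He : 0 < (a - b) / (c + 1) by apply: Rdiv_lt_0_compat; lra.
set l := Rmin 1 ((a - b) / (c + 1)).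
have Hl : 0 < l <= 1 by split; [apply: Rmin_pos; lra | apply: Rmin_l].
have : l * c <= (a - b) / (c + 1) * c by apply: Rmult_le_compat_r => //; apply: Rmin_r.
have : (a - b) / (c + 1) * c < a - b.
{ apply: (Rmult_lt_reg_r (c + 1)); first lra.
  by rewrite (_ : _ * c * (c + 1) = (a - b) * c); [nra | field; lra]. }
have := H l Hl; lra.
Qed.

Lemma prox_variational_ineq d (dom : vec d -> Prop) (h : vec d -> R) eta q p :
  0 < eta -> convex_ext dom h -> is_prox dom h eta q p ->
  forall z, dom z -> h p <= h z + dot (vsub p q) (vsub z p) / eta.
Proof.
move=> Heta Hconv [Hp Hmin] z Hz.
set D := dot (vsub p q) (vsub z p); set M := norm2 (vsub z p).
apply: (le_of_le_add_scaled _ _ (M / (2 * eta))).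
  by apply: Rmult_le_pos; [apply: norm2_ge0 | apply/Rlt_le/Rinv_0_lt_compat; lra].
move=> l [Hl0 Hl1].
(* compare p with the point l z + (1 - l) p of the segment [p, z] *)
have [Hzl Hhl] := Hconv z p l Hz Hp (conj (Rlt_le _ _ Hl0) Hl1).
have := Hmin _ Hzl; rewrite norm2_convex_comb -/D -/M => Hm.
apply: (Rmult_le_reg_l l) => //.
have -> : l * (h z + D / eta + l * (M / (2 * eta))) =
          l * h z + (2 * l * D + l ^ 2 * M) / (2 * eta) by field; lra.
have : (norm2 (vsub p q) + 2 * l * D + l ^ 2 * M) / (2 * eta) =
       norm2 (vsub p q) / (2 * eta) + (2 * l * D + l ^ 2 * M) / (2 * eta) by field; lra.
lra.
Qed.

Definition objective {d} n (f : nat -> vec d -> R) (h : vec d -> R) (x : vec d) : R :=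
  / INR n * rsum n (fun i => f i x) + h x.

Definition svrg_direction {d} n (grad : nat -> vec d -> vec d) i (x xt : vec d) : vec d :=
  vadd (vsub (grad i x) (grad i xt)) (full_grad n grad xt).

Section ProxSVRG.
Variables (n d : nat) (f : nat -> vec d -> R) (grad : nat -> vec d -> vec d) (L : R).
Hypothesis Hn : (1 <= n)%nat.
Hypothesis HL : 0 < L.
Hypothesis Hgrad : forall i x, (i < n)%nat -> has_gradient (f i) (grad i x) x.
Hypothesis Hsmooth : forall i x y, (i < n)%nat ->
  norm (vsub (grad i x) (grad i y)) <= L * norm (vsub x y).
Variables (dom : vec d -> Prop) (h : vec d -> R).
Hypothesis Hconv : convex_ext dom h.
Variables (eta : R) (prox : vec d -> vec d).
Hypothesis Heta : 0 < eta.
Hypothesis Hprox : forall x, is_prox dom h eta x (prox x).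

Lemma grad_lipschitz2 i x y : (i < n)%nat ->
  norm2 (vsub (grad i x) (grad i y)) <= L ^ 2 * norm2 (vsub x y).
Proof. by move=> Hi; apply: norm2_le_of_norm_le; [lra | apply: Hsmooth]. Qed.

Lemma full_grad_lipschitz2 x y :
  norm2 (vsub (full_grad n grad x) (full_grad n grad y)) <= L ^ 2 * norm2 (vsub x y).
Proof.
have -> : vsub (full_grad n grad x) (full_grad n grad y) =
          fun j => / INR n * rsum n (fun i => vsub (grad i x) (grad i y) j).
{ by apply: functional_extensionality => j; rewrite /vsub /full_grad rsum_sub; ring. }
apply: Rle_trans (norm2_mean_le _ _ _ Hn) _.
by apply: mean_le_const => // i Hi; apply: grad_lipschitz2.
Qed.

Lemma smooth_part_descent_le x y :
  / INR n * rsum n (fun i => f i y) <=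
  / INR n * rsum n (fun i => f i x) + dot (full_grad n grad x) (vsub y x)
  + L / 2 * norm2 (vsub y x).
Proof.
have Hdot : dot (full_grad n grad x) (vsub y x) =
            / INR n * rsum n (fun i => dot (grad i x) (vsub y x)).
{ rewrite /dot rsum_big -big_Rmult_distrl; apply: eq_bigr => j _.
  rewrite /full_grad -!rsum_scale Rmult_comm -rsum_scale.
  by apply: rsum_ext => i _; ring. }
have Hi : / INR n * rsum n (fun i =>
      f i y - f i x - dot (grad i x) (vsub y x) - L / 2 * norm2 (vsub y x)) <= 0.
{ apply: mean_le_const => // i Hi.
  have := descent_le _ (f i) (grad i) L HL (fun z => Hgrad i z Hi)
            (fun a b => grad_lipschitz2 i a b Hi) x y.
  lra. }
rewrite !rsum_sub rsum_const in Hi; rewrite Hdot.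
have : / INR n * (INR n * (L / 2 * norm2 (vsub y x))) = L / 2 * norm2 (vsub y x).
{ by field; apply: not_0_INR; case: n Hn. }
lra.
Qed.

Lemma svrg_direction_error_le i x xt : (i < n)%nat ->
  norm2 (vsub (full_grad n grad x) (svrg_direction n grad i x xt)) <=
  4 * L ^ 2 * norm2 (vsub x xt).
Proof.
move=> Hi.
have -> : vsub (full_grad n grad x) (svrg_direction n grad i x xt) =
          vsub (vsub (full_grad n grad x) (full_grad n grad xt))
               (vsub (grad i x) (grad i xt)).
{ by apply: functional_extensionality => j; rewrite /svrg_direction /vsub /vadd; ring. }
apply: Rle_trans (norm2_sub_le _ _ _) _.
have := full_grad_lipschitz2 x xt; have := grad_lipschitz2 i x xt Hi; lra.
Qed.

Lemma prox_svrg_step_le i x xt : dom x -> (i < n)%nat ->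
  let p := prox (vsub x (vscale eta (svrg_direction n grad i x xt))) in
  objective n f h p <=
  objective n f h x - eta / 2 * norm2 (grad_map n grad prox eta x)
  - (/ eta - L) / 2 * norm2 (vsub p x) + 2 * eta * L ^ 2 * norm2 (vsub x xt).
Proof.
move=> Hx Hi p.
set g := full_grad n grad x; set v := svrg_direction n grad i x xt.
set pb := prox (vsub x (vscale eta g)).
have Hpb : dom pb by case: (Hprox (vsub x (vscale eta g))).
(* compare the exact proximal gradient step pb with x, and the actual step p with pb *)
have P1 := prox_variational_ineq _ _ _ _ _ _ Heta Hconv (Hprox (vsub x (vscale eta g))) x Hx.
have P2 := prox_variational_ineq _ _ _ _ _ _ Heta Hconv (Hprox (vsub x (vscale eta v))) pb Hpb.
have Hf := smooth_part_descent_le x p; rewrite -/g in Hf.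
have Y := dot_young _ _ (vsub g v) (vsub p pb) Heta.
have Po := dot_polar _ x p pb; rewrite [norm2 (vsub pb p)]norm2_subC in Po.
have HG : eta / 2 * norm2 (grad_map n grad prox eta x) = / eta * norm2 (vsub pb x) / 2.
{ rewrite /grad_map norm2_scale norm2_subC -/g -/pb; field; lra. }
have E1 : dot (vsub pb (vsub x (vscale eta g))) (vsub x pb) / eta =
          - (/ eta * norm2 (vsub pb x)) - dot g (vsub pb x).
{ rewrite /Rdiv; field_simplify_eq; [vec_ring | lra]. }
have E2 : dot (vsub p (vsub x (vscale eta v))) (vsub pb p) / eta =
          / eta * dot (vsub p x) (vsub pb p) + dot v (vsub pb p).
{ rewrite /Rdiv; field_simplify_eq; [vec_ring | lra]. }
have E3 : dot g (vsub p x) - dot g (vsub pb x) + dot v (vsub pb p) =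
          dot (vsub g v) (vsub p pb) by vec_ring.
have Hv : eta * norm2 (vsub g v) <= eta * (4 * L ^ 2 * norm2 (vsub x xt)).
{ by apply: Rmult_le_compat_l; [lra | exact: svrg_direction_error_le]. }
rewrite /objective; rewrite E1 in P1; rewrite E2 in P2.
change (prox (vsub x (vscale eta g))) with pb in P1.
change (prox (vsub x (vscale eta v))) with p in P2.
set ie := / eta in P1 P2 Y HG *.
have Po' : ie * (2 * dot (vsub p x) (vsub pb p)) =
           ie * (norm2 (vsub pb x) - norm2 (vsub p x) - norm2 (vsub p pb)) by rewrite Po.
lra.
Qed.

Variables (m : nat) (w : nat -> nat).
Hypothesis Hw : forall k, (w k < n)%nat.

Lemma inner_dom xt s t : dom xt -> dom (inner n m grad prox eta w xt s t).
Proof. by move=> Hxt; case: t => [|t] //=; apply: (proj1 (Hprox _)). Qed.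

Lemma snapshot_dom x0 s : dom x0 -> dom (snapshot n m grad prox eta w x0 s).
Proof. by move=> Hx0; elim: s => [|s IH] //=; apply: inner_dom. Qed.

Hypothesis Hstep : 2 * (eta * L) ^ 2 * INR m * (INR m - 1) + eta * L <= 1.

Lemma epoch_descent_le xt s : dom xt ->
  objective n f h (inner n m grad prox eta w xt s m) +
  eta / 2 * rsum m (fun t => norm2 (grad_map n grad prox eta (inner n m grad prox eta w xt s t)))
  <= objective n f h xt.
Proof.
move=> Hxt; set x := inner n m grad prox eta w xt s.
set G := fun t => norm2 (grad_map n grad prox eta (x t)).
set dd := fun t => norm2 (vsub (x t.+1) (x t)).
set e := fun t => norm2 (vsub (x t) (x O)).
set a := (/ eta - L) / 2; set c := 2 * eta * L ^ 2.
have Hinner t : (t < m)%nat ->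
    objective n f h (x t.+1) <= objective n f h (x t) - (eta / 2 * G t + a * dd t - c * e t).
{ move=> _; have /= := prox_svrg_step_le (w (s * m + t)) (x t) xt (inner_dom _ _ _ Hxt) (Hw _).
  rewrite /G /dd /e /a /c; change (x O) with xt.
  change (x t.+1) with
    (prox (vsub (x t) (vscale eta (svrg_direction n grad (w (s * m + t)) (x t) xt)))).
  lra. }
have Hdesc := rsum_telescope_le m _ _ Hinner.
rewrite /= rsum_sub rsum_add !rsum_scale in Hdesc; change (x O) with xt in Hdesc.
have Hdrift := rsum_norm2_drift_le _ x m; rewrite -/e -/dd in Hdrift.
(* the drift of the inner iterates away from the snapshot is paid for by the proximal steps *)
have Hca : c * (INR m * (INR m - 1) / 2) <= a.
{ apply: (Rmult_le_reg_l (2 * eta)); first lra.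
  rewrite /a /c (_ : 2 * eta * ((/ eta - L) / 2) = 1 - eta * L); last by field; lra.
  lra. }
have Hdd : 0 <= rsum m dd by apply: rsum_ge0 => t _; apply: norm2_ge0.
have : c * rsum m e <= a * rsum m dd.
{ apply: Rle_trans (Rmult_le_compat_l _ _ _ _ Hdrift) _; first by rewrite /c; nra.
  by rewrite -Rmult_assoc; apply: Rmult_le_compat_r. }
lra.
Qed.

Lemma prox_svrg_descent_le x0 S : dom x0 ->
  objective n f h (snapshot n m grad prox eta w x0 S) +
  eta / 2 * rsum S (fun s => rsum m (fun t =>
    norm2 (grad_map n grad prox eta (iterate n m grad prox eta w x0 s t))))
  <= objective n f h x0.
Proof.
move=> Hx0; rewrite -rsum_scale.
apply: (rsum_telescope_le S (fun s => objective n f h (snapshot n m grad prox eta w x0 s))) => s _.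
have := epoch_descent_le _ s (snapshot_dom _ s Hx0); rewrite /iterate /=; lra.
Qed.

End ProxSVRG.

Lemma expect_le_const n K (g : (nat -> nat) -> R) c : (1 <= n)%nat ->
  (forall w, (forall k, (w k < n)%nat) -> g w <= c) -> expect n K g <= c.
Proof.
move=> Hn; elim: K g => [|K IH] g Hg /=; first exact: Hg.
apply: mean_le_const => // i Hi; apply: IH => w' Hw'.
by apply: Hg => -[|k] /=.
Qed.

Lemma step_size_condition_inv_3Ln n L : 0 < L -> 1 <= INR n ->
  2 * (/ (3 * L * INR n) * L) ^ 2 * INR n * (INR n - 1) + / (3 * L * INR n) * L <= 1.
Proof.
move=> HL Hn.
rewrite (_ : _ + _ = (2 * INR n + 1) / (9 * INR n)); last by field; lra.
apply: (Rmult_le_reg_r (9 * INR n)); first lra.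
rewrite /Rdiv Rmult_assoc Rinv_l; lra.
Qed.

Theorem theorem1
  (n d : nat) (Hn : (1 <= n)%nat) (Hd : (1 <= d)%nat)
  (f : nat -> vec d -> R) (grad : nat -> vec d -> vec d) (L : R) (HL : 0 < L)
  (Hgrad : forall i x, (i < n)%nat -> has_gradient (f i) (grad i x) x)
  (Hsmooth : forall i x y, (i < n)%nat ->
     norm (vsub (grad i x) (grad i y)) <= L * norm (vsub x y))
  (dom : vec d -> Prop) (h : vec d -> R)
  (Hproper : proper_dom dom) (Hclosed : closed_dom dom)
  (Hconv : convex_ext dom h) (Hlsc : lsc_ext dom h)
  (xstar : vec d) (Hxstar_dom : dom xstar)
  (Hxstar : forall y, dom y ->
     / INR n * rsum n (fun i => f i xstar) + h xstar
     <= / INR n * rsum n (fun i => f i y) + h y)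
  (prox : vec d -> vec d)
  (Hprox : forall x, is_prox dom h (/ (3 * L * INR n)) x (prox x))
  (x0 : vec d) (Hx0 : dom x0)
  (S T : nat) (HS : (1 <= S)%nat) (HT : T = (S * n)%nat) :
  let eta := / (3 * L * INR n) in
  let F := fun x => / INR n * rsum n (fun i => f i x) + h x in
  expect n T (fun w =>
     / INR T * rsum S (fun s => rsum n (fun t =>
        norm2 (grad_map n grad prox eta (iterate n n grad prox eta w x0 s t)))))
  <= 18 * L * INR n ^ 2 / (3 * INR n - 2) * ((F x0 - F xstar) / INR T).
Proof.
move=> eta F.
have Hn1 : 1 <= INR n by apply: (le_INR 1); apply/leP.
have HT' : 0 < INR T by rewrite HT mult_INR; apply: Rmult_lt_0_compat; apply/lt_0_INR/ltP.
have Heta : 0 < eta by apply/Rinv_0_lt_compat/Rmult_lt_0_compat; lra.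
have Hgap : 0 <= F x0 - F xstar by have := Hxstar _ Hx0; rewrite /F /=; lra.
(* the pathwise rate 2 / eta = 6 L n is already below the stated constant *)
have Hconst : 6 * L * INR n <= 18 * L * INR n ^ 2 / (3 * INR n - 2).
{ apply: (Rmult_le_reg_r (3 * INR n - 2)); first lra.
  rewrite (_ : _ / _ * _ = 18 * L * INR n ^ 2); [nra | field; lra]. }
apply: expect_le_const => // w Hw.
have Hdesc := prox_svrg_descent_le n d f grad L Hn HL Hgrad Hsmooth dom h Hconv eta prox
  Heta Hprox n w Hw (step_size_condition_inv_3Ln n L HL Hn1) x0 S Hx0.
have Hopt := Hxstar _ (snapshot_dom n d grad dom h eta prox Hprox n w x0 S Hx0).
rewrite /objective -/(F _) -/(F x0) in Hdesc.
rewrite -/(F xstar) -/(F (snapshot n n grad prox eta w x0 S)) in Hopt.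
set Sum := rsum S _ in Hdesc *.
have HSum : Sum <= 6 * L * INR n * (F x0 - F xstar).
{ rewrite (_ : Sum = 6 * L * INR n * (eta / 2 * Sum)); last by rewrite /eta; field; lra.
  by apply: Rmult_le_compat_l; [apply: Rmult_le_pos; lra | lra]. }
rewrite (_ : _ * (_ / _) = / INR T * (18 * L * INR n ^ 2 / (3 * INR n - 2) * (F x0 - F xstar)));
  last by field; lra.
apply: Rmult_le_compat_l; [exact/Rlt_le/Rinv_0_lt_compat | nra].
Qed.
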